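(* Let $X \subseteq \mathbb{P}^N$ be an irreducible, nondegenerate variety over an algebraically closed field of characteristic zero, with generic rank $g$ and maximal rank $m$. For $1 \leq k \leq g-1$, $\sigma_k(X) \not\subset W_{2g-k+1}$. In particular, if $m=2g$, then for $1 \leq k \leq g-1$, $\sigma_k(X) \not\subset W_{m-k+1}$.
   Context: For a nondegenerate variety $X\subseteq\mathbb{P}^N$, the rank of a point $p$ is the least $r$ such that $p$ lies in the linear span of some $r$ distinct points of $X$; $W_k$ is the Zariski closure of the set of points of rank exactly $k$ (empty if there are none); $g$ is the rank of a general point and $m$ the maximum rank. The $k$-th secant variety $\sigma_k(X)$ is the closure of the set of points of rank at most $k$. *)

From mathcomp Require Import all_boot all_algebra.
From mathcomp Require Import mpoly.
Set Implicit Arguments. Unset Strict Implicit. Unset Printing Implicit Defensive.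
Import GRing.Theory.
Local Open Scope ring_scope.

(* Projective space P^N over k is modelled by nonzero vectors of k^(N+1),
   i.e. functions 'I_(N.+1) -> k; a subset of P^N is a predicate on vectors
   (only its nonzero, scaling-invariant part matters). *)
Section ProjDefs.
Variable k : fieldType.
Variable N : nat.

Definition vec := 'I_N.+1 -> k.
Definition pset := vec -> Prop.

Definition nonzero (v : vec) : Prop := exists i, v i != 0.

Definition proj_eq (v w : vec) : Prop :=
  exists c : k, c != 0 /\ forall i, w i = c * v i.

Definition homogeneous (p : {mpoly k[N.+1]}) : Prop := exists d, p \is d.-homog.

Definition zero_locus (F : {mpoly k[N.+1]} -> Prop) : pset :=
  fun v => nonzero v /\ forall p, F p -> p.@[v] = 0.

Definition zclosed (Z : pset) : Prop :=
  exists F : {mpoly k[N.+1]} -> Prop,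
    (forall p, F p -> homogeneous p) /\ forall v, Z v <-> zero_locus F v.

Definition zclosure (S : pset) : pset :=
  zero_locus (fun p => homogeneous p /\ forall v, nonzero v -> S v -> p.@[v] = 0).

Definition psubset (A B : pset) : Prop := forall v, nonzero v -> A v -> B v.

Definition irreducible_var (X : pset) : Prop :=
  (exists v, nonzero v /\ X v) /\
  forall Z1 Z2 : pset, zclosed Z1 -> zclosed Z2 ->
    psubset X (fun v => Z1 v \/ Z2 v) -> psubset X Z1 \/ psubset X Z2.

Definition nondegenerate_var (X : pset) : Prop :=
  forall a : vec, (forall v, nonzero v -> X v -> \sum_i a i * v i = 0) ->
    forall i, a i = 0.

Definition in_span_distinct (X : pset) (p : vec) (r : nat) : Prop :=
  exists xs : 'I_r -> vec,
    (forall j, nonzero (xs j) /\ X (xs j)) /\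
    (forall j j', j != j' -> ~ proj_eq (xs j) (xs j')) /\
    exists c : 'I_r -> k, forall i, p i = \sum_j c j * xs j i.

Definition rank_eq (X : pset) (p : vec) (r : nat) : Prop :=
  nonzero p /\ in_span_distinct X p r /\
  forall r', (r' < r)%N -> ~ in_span_distinct X p r'.

Definition W (X : pset) (r : nat) : pset := zclosure (fun p => rank_eq X p r).

Definition sigma (X : pset) (r : nat) : pset :=
  zclosure (fun p => exists r', (r' <= r)%N /\ rank_eq X p r').

Definition generic_rank (X : pset) (g : nat) : Prop :=
  exists Z : pset, zclosed Z /\ (exists v, nonzero v /\ ~ Z v) /\
    forall p, nonzero p -> ~ Z p -> rank_eq X p g.

Definition max_rank (X : pset) (m : nat) : Prop :=
  (exists p, rank_eq X p m) /\ forall p r, rank_eq X p r -> (r <= m)%N.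

End ProjDefs.

From mathcomp Require Import all_boot all_algebra.
From mathcomp Require Import mpoly zify.
From Stdlib Require Import Classical.
Set Implicit Arguments. Unset Strict Implicit. Unset Printing Implicit Defensive.
Import GRing.Theory.
Local Open Scope ring_scope.

(* Write a general point u, of rank g, as u = x + w with x in the span of j
   points and w in the span of g - j points; x lies in sigma_j.  Take a form f
   vanishing on the non-generic locus Z but not at u, and set
   h(v) := f(v + (v_i0 / x_i0) w) for a coordinate with x_i0 <> 0.  Then
   h(x) = f(u) <> 0.  If v has rank r > 2g - j, then q := v + (v_i0 / x_i0) w
   must lie in Z: otherwise q is 0 or of rank g, and v = q - (v_i0 / x_i0) w
   would have rank at most 2g - j.  Hence h vanishes on the points of rank r,
   so on W_r, which therefore does not contain x. *)

Section Span.
Variables (k : fieldType) (N : nat) (X : pset k N).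

Definition in_span (p : vec k N) (n : nat) : Prop :=
  exists xs : 'I_n -> vec k N, (forall j, nonzero (xs j) /\ X (xs j)) /\
    exists c : 'I_n -> k, forall i, p i = \sum_j c j * xs j i.

Lemma in_span_ext p q n : (forall i, p i = q i) -> in_span p n -> in_span q n.
Proof. by move=> epq [xs [Xxs [c Hc]]]; exists xs; split => //; exists c => i; rewrite -epq. Qed.

Lemma in_span_distinctW p n : in_span_distinct X p n -> in_span p n.
Proof. by case=> xs [Xxs [_ Hc]]; exists xs. Qed.

Lemma in_span0 : in_span (fun _ => 0) 0.
Proof. by exists (fun _ _ => 0); split; [case | exists (fun _ => 0) => i; rewrite big_ord0]. Qed.

Lemma in_spanZ p n (t : k) : in_span p n -> in_span (fun i => t * p i) n.
Proof.
case=> xs [Xxs [c Hc]]; exists xs; split => //; exists (fun j => t * c j) => i.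
by rewrite Hc mulr_sumr; apply: eq_bigr => j _; rewrite mulrA.
Qed.

Lemma in_spanD p q a b :
  in_span p a -> in_span q b -> in_span (fun i => p i + q i) (a + b).
Proof.
case=> ys [Xys [cy Hp]] [zs [Xzs [cz Hq]]].
have sl l : split (lshift b l) = inl l := unsplitK (inl l).
have sr l : split (rshift a l) = inr l := unsplitK (inr l).
exists (fun l => match split l with inl l => ys l | inr l => zs l end).
split; first by move=> l; case: (split l).
exists (fun l => match split l with inl l => cy l | inr l => cz l end) => i.
by rewrite Hp Hq big_split_ord /=; congr (_ + _); apply: eq_bigr => l _; rewrite ?sl ?sr.
Qed.

Lemma in_span_split p a b : in_span p (a + b) ->
  exists x w, [/\ in_span x a, in_span w b & forall i, p i = x i + w i].
Proof.
case=> xs [Xxs [c Hc]].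
exists (fun i => \sum_(l < a) c (lshift b l) * xs (lshift b l) i).
exists (fun i => \sum_(l < b) c (rshift a l) * xs (rshift a l) i).
split; last by move=> i; rewrite Hc big_split_ord.
  by exists (fun l => xs (lshift b l)); split => //; exists (fun l => c (lshift b l)).
by exists (fun l => xs (rshift a l)); split => //; exists (fun l => c (rshift a l)).
Qed.

(* A repeated point (up to scaling) is removed by moving its coefficient onto
   its twin. *)
Lemma in_span_distinct_le p n : in_span p n -> exists2 r, (r <= n)%N & in_span_distinct X p r.
Proof.
elim: n p => [|n IH] p [ys [Xys [c Hp]]].
  by exists 0%N => //; exists ys; split => //; split; [case | exists c].
case: (classic (forall j j', j != j' -> ~ proj_eq (ys j) (ys j'))) => [Hd|Hnd].
  by exists n.+1 => //; exists ys; split => //; split => //; exists c.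
have [j [j' [neq_jj' [t [_ Ht]]]]] : exists j j', j != j' /\ proj_eq (ys j) (ys j').
  by apply: NNPP => H; apply: Hnd => j j' ? ?; apply: H; exists j, j'.
case: (unliftP j' j) => [j1 Ej|Ej]; last by rewrite Ej eqxx in neq_jj'.
have [|r le_rn Hr] := IH p.
  exists (fun l => ys (lift j' l)); split => [l|]; first exact: Xys.
  exists (fun l => c (lift j' l) + (if l == j1 then c j' * t else 0)) => i.
  rewrite Hp (bigD1_ord j') //=.
  under [RHS]eq_bigr => l _ do rewrite mulrDl.
  rewrite big_split /= addrC; congr (_ + _).
  rewrite (bigD1 j1) //= eqxx big1 => [|l /negbTE ->]; last by rewrite mul0r.
  by rewrite addr0 Ht Ej mulrA.
by exists r => //; apply: leqW.
Qed.

Lemma rank_le_in_span p r n : rank_eq X p r -> in_span p n -> (r <= n)%N.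
Proof.
move=> [_ [_ Hmin]] /in_span_distinct_le [r' le_r'n Hr'].
by rewrite leqNgt; apply/negP => lt_nr; apply: (Hmin r') Hr'; apply: leq_ltn_trans lt_nr.
Qed.

Lemma rank_exists_le p n : nonzero p -> in_span p n -> exists2 r, (r <= n)%N & rank_eq X p r.
Proof.
move=> nz_p /in_span_distinct_le [n' le_n'n]; elim/ltn_ind: n' le_n'n => n' IH le_n'n Hn'.
case: (classic (exists2 r', (r' < n')%N & in_span_distinct X p r')) => [[r' lt_r' Hr']|Hno].
  by apply: (IH r') => //; apply: leq_trans (ltnW lt_r') le_n'n.
by exists n' => //; split => //; split => // r' ? ?; apply: Hno; exists r'.
Qed.

End Span.

Section Zariski.
Variables (k : fieldType) (N : nat).

Lemma zclosure_sub (S : pset k N) v : nonzero v -> S v -> zclosure S v.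
Proof. by move=> nz_v Sv; split => // p [_]; apply. Qed.

Lemma zclosed_separate (Z : pset k N) u : zclosed Z -> nonzero u -> ~ Z u ->
  exists f, [/\ homogeneous f, f.@[u] != 0 & forall v, Z v -> f.@[v] = 0].
Proof.
move=> [F [homF HZ]] nz_u nZu.
have [f Ff fu] : exists2 f, F f & f.@[u] != 0.
  apply: NNPP => H; apply: nZu; apply/HZ; split => // f Ff.
  by apply: NNPP => /eqP fu; apply: H; exists f.
by exists f; split => [|//|v /HZ [_]]; [exact: homF | exact].
Qed.

Lemma dhomog_mPo n d (f : {mpoly k[n]}) (lq : n.-tuple {mpoly k[n]}) :
  f \is d.-homog -> (forall i, tnth lq i \is 1%N.-homog) -> f \mPo lq \is d.-homog.
Proof.
move=> hom_f hom_lq; rewrite comp_mpolyE big_seq.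
apply: (big_ind (fun q => q \is d.-homog)); [exact: dhomog0 | exact: dhomogD |].
move=> m supp_m; apply: dhomogZ.
rewrite -(dhomog_mf hom_f supp_m) /= mdegE.
apply: (big_rec2 (fun e q => q \is e.-homog)); first exact: dhomog1.
move=> i e q _ hom_q; apply: dhomogM => //.
by have := dhomogMn (m i) (hom_lq i); rewrite mul1n.
Qed.

Definition shear (f : {mpoly k[N.+1]}) (i0 : 'I_N.+1) (a : vec k N) :=
  f \mPo [tuple 'X_i + a i *: 'X_i0 | i < N.+1].

Lemma shearE f i0 a v : (shear f i0 a).@[v] = f.@[fun i => v i + v i0 * a i].
Proof.
rewrite comp_mpoly_meval; apply: meval_eq => i.
by rewrite tnth_mktuple mevalD mevalZ !mevalXU mulrC.
Qed.

Lemma shear_homogeneous f i0 a : homogeneous f -> homogeneous (shear f i0 a).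
Proof.
case=> d hom_f; exists d; apply: dhomog_mPo => // i; rewrite tnth_mktuple.
by apply: dhomogD; last apply: dhomogZ; rewrite dhomogX /= mdeg1.
Qed.

End Zariski.

Section GenericRank.
Variables (k : fieldType) (N : nat) (X : pset k N) (g : nat) (Z : pset k N).
Hypothesis rankZ : forall p, nonzero p -> ~ Z p -> rank_eq X p g.

Lemma rank_le_off_generic v q w (t : k) r b :
  rank_eq X v r -> in_span X w b -> ~ Z q -> (forall i, v i = q i + t * w i) ->
  (r <= g + b)%N.
Proof.
move=> rk_v w_b nZq v_qw.
have [g' le_g'g q_g'] : exists2 g', (g' <= g)%N & in_span X q g'.
  case: (classic (nonzero q)) => [nz_q|z_q].
    by exists g => //; apply: in_span_distinctW; case: (rankZ nz_q nZq) => _ [].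
  exists 0%N => //; apply: (in_span_ext _ (in_span0 X)) => i.
  by apply: NNPP => q_i; apply: z_q; exists i; apply/eqP => /esym.
have v_sum : in_span X v (g' + b).
  by apply: (in_span_ext _ (in_spanD q_g' (in_spanZ t w_b))) => i; rewrite v_qw.
by apply: leq_trans (rank_le_in_span rk_v v_sum) _; rewrite leq_add2r.
Qed.

End GenericRank.

Lemma sigma_not_subset_W (k : fieldType) (N : nat) (X : pset k N) (g j r : nat) :
  generic_rank X g -> (0 < j <= g)%N -> (2 * g - j < r)%N ->
  ~ psubset (sigma X j) (W X r).
Proof.
move=> [Z [zclZ [[u [nz_u nZu]] rankZ]]] /andP [j_gt0 le_jg] lt_r sub_W.
have rk_u := rankZ _ nz_u nZu.
have [f [hom_f fu f_Z]] := zclosed_separate zclZ nz_u nZu.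
have [x [w [x_j w_gj u_xw]]] :
    exists x w, [/\ in_span X x j, in_span X w (g - j) & forall i, u i = x i + w i].
  by apply: in_span_split; rewrite subnKC //; apply: in_span_distinctW; case: rk_u => _ [].
have nz_x : nonzero x.
  apply: NNPP => z_x; suff : (g <= g - j)%N by lia.
  apply: (rank_le_in_span rk_u (in_span_ext _ w_gj)) => i.
  rewrite u_xw; suff -> : x i = 0 by rewrite add0r.
  by apply: NNPP => x_i; apply: z_x; exists i; apply/eqP.
have [i0 x_i0] := nz_x.
pose h := shear f i0 (fun i => (x i0)^-1 * w i).
have sigma_x : sigma X j x.
  by have [r' ? ?] := rank_exists_le nz_x x_j; apply: zclosure_sub nz_x _; exists r'.
have h_x : h.@[x] = 0.
  case: (sub_W x nz_x sigma_x) => _; apply; split; first exact: shear_homogeneous.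
  move=> v _ rk_v; rewrite shearE; apply: f_Z; apply: NNPP => nZq.
  suff : (r <= g + (g - j))%N by lia.
  apply: (rank_le_off_generic rankZ rk_v w_gj nZq (t := - (v i0 / x i0))) => i.
  by rewrite mulNr mulrA addrK.
move/eqP: fu; apply; rewrite -h_x shearE; apply: meval_eq => i.
by rewrite mulrA mulfV // mul1r u_xw.
Qed.

Theorem corollary3p4 (k : closedFieldType) (N : nat) (X : pset k N) (g m : nat) :
  [pchar k] =i pred0 ->
  zclosed X -> irreducible_var X -> nondegenerate_var X ->
  generic_rank X g -> max_rank X m ->
  (forall j : nat, (1 <= j <= g - 1)%N ->
     ~ psubset (sigma X j) (W X (2 * g - j + 1))) /\
  (m = (2 * g)%N -> forall j : nat, (1 <= j <= g - 1)%N ->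
     ~ psubset (sigma X j) (W X (m - j + 1))).
Proof.
move=> _ _ _ _ gen_g _.
have sigma_W j : (1 <= j <= g - 1)%N -> ~ psubset (sigma X j) (W X (2 * g - j + 1)).
  by move=> /andP [j_gt0 le_j]; apply: sigma_not_subset_W gen_g _ _; lia.
by split => // -> j; apply: sigma_W.
Qed.
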